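(* Let $G$ be a composite graph on $n$ nodes with skeleton $\widehat G$ on $m$ nodes, whose components $G_1,\dots,G_m$ are all cliques (of arbitrary sizes). Let $d^{in}_{\max}(G)$ be the maximum in-degree of the nodes of $G$. If $$d^{in}_{\max}(G)\le n-\frac{m+1}{2},$$ then $G$ is not a stable motif (for any CTLN $W(G,\varepsilon,\delta)$ with legal parameters). In particular, if $\widehat G$ has maximum in-degree $d^{in}_{\max}(\widehat G)<\frac m2$, then $G$ is not a stable motif.
   Context: Composite graph: given graphs $G_1,\dots,G_m$ (nonempty) and a simple directed graph $\widehat G$ on $[m]$, the composite graph with components $G_i$ and skeleton $\widehat G$ is the union of the $G_i$ (with their internal edges) plus, for $u\in G_i$, $v\in G_j$, $i\ne j$, an edge $u\to v$ iff $i\to j$ in $\widehat G$. A clique is a graph with all pairs bidirectionally connected. For a simple directed graph $H$ on $[h]$ and legal parameters ($\delta>0$, $0<\varepsilon<\frac{\delta}{\delta+1}$), the CTLN $W=W(H,\varepsilon,\delta)$ has $W_{ii}=0$, $W_{ij}=-1+\varepsilon$ if $j\to i$, $W_{ij}=-1-\delta$ if $i\ne j$, $j\not\to i$ (dynamics $\dot x_i=-x_i+[\sum_jW_{ij}x_j+\theta]_+$, $\theta>0$; assumed nondegenerate). $H$ is a stable motif if $\theta(I-W)^{-1}1$ has all entries positive and all eigenvalues of $I-W$ have positive real part. *)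

(* R is an arbitrary real closed field (e.g. the reals),
   eigenvalues are taken in its algebraic closure R[i] (mathcomp-real-closed). *)
From HB Require Import structures.
From mathcomp Require Import all_boot all_order all_algebra.
From mathcomp Require Import complex.
Set Implicit Arguments. Unset Strict Implicit. Unset Printing Implicit Defensive.
Import Order.TTheory GRing.Theory Num.Theory.
Local Open Scope ring_scope.

(* A directed graph on a finite vertex type is a relation; [G u v] means u -> v. *)

Definition simple_digraph (T : finType) (G : rel T) : Prop := forall v, ~~ G v v.

(* Composite graph on [n] nodes whose m components are all cliques:
   [c v] is the index of the component containing v (c surjective = components
   nonempty); inside a component all distinct pairs are (bidirectionally)
   connected; between components u -> v iff (c u) -> (c v) in the skeleton. *)
Definition composite_clique_graph (n m : nat) (c : 'I_n -> 'I_m) (Gh : rel 'I_m)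
  : rel 'I_n :=
  fun u v => (u != v) && ((c u == c v) || Gh (c u) (c v)).

Definition indeg (T : finType) (G : rel T) (v : T) : nat := #|[set u | G u v]|.
Definition max_indeg (T : finType) (G : rel T) : nat := (\max_(v : T) indeg G v)%N.

Definition legal_params (R : realFieldType) (eps delta : R) : Prop :=
  0 < delta /\ 0 < eps /\ eps < delta / (delta + 1).

Definition ctln (R : pzRingType) (n : nat) (H : rel 'I_n) (eps delta : R) : 'M[R]_n :=
  \matrix_(i, j) (if i == j then 0
                  else if H j i then -1 + eps else -1 - delta).

Definition stable_motif (R : rcfType) (n : nat) (H : rel 'I_n)
    (eps delta theta : R) : Prop :=
  let A := 1%:M - ctln H eps delta in
  [/\ A \in unitmx,
      forall i : 'I_n, 0 < (theta *: (invmx A *m (const_mx 1 : 'cV[R]_n))) i ord0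
    & forall lam : R[i],
        eigenvalue (map_mx (real_complex R) A) lam -> 0 < complex.Re lam].

From HB Require Import structures.
From mathcomp Require Import all_boot all_order all_algebra.
From mathcomp Require Import complex polyrcf.
From mathcomp Require Import lra zify.
From Stdlib Require Import Lia Classical.
Set Implicit Arguments. Unset Strict Implicit. Unset Printing Implicit Defensive.
Import Order.TTheory GRing.Theory Num.Theory.
Local Open Scope ring_scope.

(* Write I - W = eps I + U V, where U is the n x m indicator matrix of the
   components and V i w is 1 - eps or 1 + delta according as the component of w
   is or is not in the closed in-neighbourhood of i in the skeleton.  The
   nonzero eigenvalues of U V are those of V U, so stability of G makes the
   nonnegative m x m matrix C = V U + eps I positive stable.  The degree bound
   says that every row sum of C is at least tr C = n (1 - eps) + m eps.  A
   Perron-Frobenius type argument then yields a real eigenvalue t >= tr C,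
   whereas for a positive stable matrix of size m >= 2 every real eigenvalue is
   smaller than the trace, which is the sum of all the eigenvalues. *)

Lemma eigenvalue_add_scalar (F : fieldType) n (A : 'M[F]_n) (e lam : F) :
  eigenvalue (A + e%:M) lam = eigenvalue A (lam - e).
Proof. by rewrite /eigenvalue /eigenspace raddfB /= opprB addrA. Qed.

Lemma eigenvalue_mulmxC (F : fieldType) n m (U : 'M[F]_(n, m)) (V : 'M[F]_(m, n))
    (lam : F) :
  lam != 0 -> eigenvalue (V *m U) lam -> eigenvalue (U *m V) lam.
Proof.
move=> lam_neq0 /eigenvalueP [w wVU w_neq0]; apply/eigenvalueP.
exists (w *m V); first by rewrite mulmxA -(mulmxA w) wVU scalemxAl.
apply: contraNneq w_neq0 => wV0.
by move: wVU; rewrite mulmxA wV0 mul0mx => /esym /eqP; rewrite scaler_eq0 (negPf lam_neq0).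
Qed.

Definition positive_stable (R : rcfType) n (A : 'M[R]_n) : Prop :=
  forall lam : R[i], eigenvalue (map_mx (real_complex R) A) lam -> 0 < complex.Re lam.

Lemma positive_stable_mulmxC (R : rcfType) n m (U : 'M[R]_(n, m)) (V : 'M[R]_(m, n))
    (e : R) :
  0 < e -> positive_stable (e%:M + U *m V) -> positive_stable (V *m U + e%:M).
Proof.
move=> e_gt0 stUV lam; set phi := real_complex R.
rewrite map_mxD map_mxM map_scalar_mx eigenvalue_add_scalar.
have [-> _|lam_neq] := eqVneq lam (phi e); first by [].
move=> /eigenvalue_mulmxC; rewrite subr_eq0 => /(_ lam_neq) UV.
by apply: stUV; rewrite addrC map_mxD map_mxM map_scalar_mx eigenvalue_add_scalar.
Qed.

Lemma root_char_poly_lt_trace (R : rcfType) n (M : 'M[R]_n) (t : R) :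
  (1 < n)%N -> positive_stable M -> root (char_poly M) t -> t < \tr M.
Proof.
move=> n_gt1 stM rt; pose Mc := map_mx (real_complex R) M.
have [zs Dzs] := closed_field_poly_normal (char_poly Mc).
rewrite (eqP (char_poly_monic Mc)) scale1r in Dzs.
have size_zs : size zs = n by have := size_char_poly Mc; rewrite Dzs size_prod_XsubC => -[].
have sum_zs : \sum_(z <- zs) z = real_complex R (\tr M).
  apply: oppr_inj; rewrite -trace_map_mx -char_poly_trace ?(ltnW n_gt1) //.
  by rewrite Dzs -size_zs coefPn_prod_XsubC ?size_zs -?lt0n ?(ltnW n_gt1).
have t_zs : real_complex R t \in zs by rewrite -root_prod_XsubC -Dzs -map_char_poly rmorph_root.
have Re_zs z : z \in zs -> 0 < complex.Re z.
  by move=> z_zs; apply: stM; rewrite eigenvalue_root_char Dzs root_prod_XsubC.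
have sum_rem : \sum_(z <- zs) z = real_complex R t + \sum_(z <- rem (real_complex R t) zs) z.
  by rewrite (perm_big _ (perm_to_rem t_zs)) big_cons.
have := congr1 (@complex.Re R) sum_rem; rewrite sum_zs raddfD /= => ->.
rewrite ltrDl raddf_sum.
have : size (rem (real_complex R t) zs) = n.-1 by rewrite size_rem // size_zs.
have Re_rem z : z \in rem (real_complex R t) zs -> 0 < complex.Re z.
  by move/mem_rem; apply: Re_zs.
case: (rem _ _) Re_rem => [|z zs'] Re_rem.
  by move=> /esym/eqP; rewrite -subn1 subn_eq0 leqNgt n_gt1.
move=> _; rewrite big_cons ltr_pwDl ?Re_rem ?mem_head //.
by rewrite big_seq sumr_ge0 // => z' z'_zs; rewrite ltW ?Re_rem // in_cons z'_zs orbT.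
Qed.

Lemma polys_nonneg_down_to_root (R : rcfType) (I : finType) (h : I -> {poly R}) (a b : R) :
  a <= b -> (forall i, 0 < (h i).[b]) ->
  exists2 y, a <= y & (forall i, 0 <= (h i).[y]) /\ (y = a \/ exists i, root (h i) y).
Proof.
move=> le_ab h_gt0; pose G := \prod_i h i; pose y := prev_root G a b.
have G_neq0 : G != 0.
  have : 0 < G.[b] by rewrite horner_prod prodr_gt0.
  by apply: contraTneq => ->; rewrite horner0 ltxx.
have /andP[le_ay le_yb] : a <= y <= b.
  by have := prev_root_in G a b; rewrite (min_l le_ab) in_itv.
exists y => //; split.
  move=> i; rewrite leNgt; apply/negP => hy_lt0.
  have [|x x_in hx0] := @poly_ivtoo _ (h i) _ _ le_yb; first by rewrite pmulr_llt0.
  have /negP := prev_noroot x_in; apply.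
  by rewrite /root horner_prod; apply/prodf_eq0; exists i.
rewrite /y; case: prev_rootP => [G0|z _ Gz0 _ _|c _ -> _]; first by rewrite G0 eqxx in G_neq0.
  by right; move: Gz0; rewrite horner_prod => /eqP/prodf_eq0 [i _ hi0]; exists i.
by left; rewrite (min_l le_ab).
Qed.

Lemma horner_char_poly_mx (R : comNzRingType) n (P : 'M[R]_n) (t : R) :
  map_mx (horner_eval t) (char_poly_mx P) = t%:M - P.
Proof.
by apply/matrixP => i j; rewrite !mxE /horner_eval hornerD hornerN hornerMn hornerX hornerC.
Qed.

Lemma char_poly_adj_horner (R : comNzRingType) n (P : 'M[R]_n) (t : R) :
  (t%:M - P) *m map_mx (horner_eval t) (\adj (char_poly_mx P)) = (char_poly P).[t]%:M.
Proof. by rewrite -horner_char_poly_mx -map_mxM mul_mx_adj map_scalar_mx. Qed.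

Lemma mulmx_argmin_le (R : realDomainType) n (P : 'M[R]_n) (x : 'cV[R]_n) (t : R) i0 :
  (forall i j, 0 <= P i j) -> (forall j, x i0 0 <= x j 0) ->
  ((t%:M - P) *m x) i0 0 <= (t - \sum_j P i0 j) * x i0 0.
Proof.
move=> P_ge0 x_min; rewrite mulmxBl mul_scalar_mx !mxE mulrBl mulr_suml lerD2l lerN2.
by apply: ler_sum => j _; apply: ler_wpM2l.
Qed.

Lemma char_poly_root_ge_min_rowsum (R : rcfType) n (P : 'M[R]_n) (r : R) :
  (0 < n)%N -> (forall i j, 0 <= P i j) -> (forall i, r <= \sum_j P i j) ->
  exists2 t, r <= t & root (char_poly P) t.
Proof.
move=> n_gt0 P_ge0 r_le; pose p := char_poly P.
case: (classic (exists2 t, r <= t & root p t)) => // no_root.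
have p_gt0 t : r <= t -> 0 < p.[t].
  move=> le_rt; have := @sgp_pinftyP _ r p _ t; rewrite in_itv /= le_rt /sgp_pinfty.
  rewrite (eqP (char_poly_monic P)) sgr1 => /(_ _ isT) /eqP; rewrite sgr_cp0; apply.
  by move=> s; rewrite in_itv /= andbT => le_rs; apply/negP => ps; apply: no_root; exists s.
(* x t = adj (t - P) 1 solves (t - P) (x t) = p.[t] 1, so at a minimal entry i0
   of x t we get 0 < (t - rowsum i0) * x t i0.  This makes x b positive for a
   large b; walking down from b, the entries stay nonnegative until one of them
   vanishes or until r is reached, and the gap fails at both kinds of points. *)
pose g : 'cV_n := \adj (char_poly_mx P) *m const_mx 1.
pose x (t : R) := map_mx (horner_eval t) g.
have gap t : r <= t ->
    exists i0, (forall j, x t i0 0 <= x t j 0) /\ 0 < (t - \sum_j P i0 j) * x t i0 0.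
  move=> le_rt; have [i0 _ min_i0] := arg_minP (fun i => x t i 0) (isT : predT (Ordinal n_gt0)).
  have {}min_i0 j : x t i0 0 <= x t j 0 by apply: min_i0.
  exists i0; split=> //; apply: lt_le_trans (mulmx_argmin_le t P_ge0 min_i0).
  by rewrite /x /g map_mxM mulmxA char_poly_adj_horner mul_scalar_mx !mxE rmorph1 mulr1 p_gt0.
pose b := \sum_i \sum_j P i j.
have rowsum_le_b i : \sum_j P i j <= b.
  by rewrite /b [leRHS](bigD1 i) //= lerDl sumr_ge0 // => k _; rewrite sumr_ge0.
have le_rb : r <= b := le_trans (r_le (Ordinal n_gt0)) (rowsum_le_b _).
have xb_gt0 i : 0 < x b i 0.
  have [i0 [min_i0 gap0]] := gap b le_rb; apply: lt_le_trans (min_i0 i).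
  rewrite ltNge; apply: contraTN gap0 => xi0_le0.
  by rewrite -leNgt mulr_ge0_le0 // subr_ge0.
have [|y le_ry [y_ge0 y_end]] := @polys_nonneg_down_to_root _ _ (fun i => g i 0) r b le_rb.
  by move=> i; have := xb_gt0 i; rewrite mxE.
have [i0 [min_i0 gap0]] := gap y le_ry.
suff : (y - \sum_j P i0 j) * x y i0 0 <= 0 by rewrite leNgt gap0.
have xyE j : x y j 0 = (g j 0).[y] by rewrite mxE.
case: y_end => [y_r|[i /eqP gi0]].
  by rewrite mulr_le0_ge0 ?xyE ?y_ge0 // subr_le0 y_r r_le.
have -> : x y i0 0 = 0 by apply/eqP; rewrite eq_le xyE y_ge0 andbT -gi0 -!xyE min_i0.
by rewrite mulr0.
Qed.

Lemma nonneg_mx_not_positive_stable (R : rcfType) n (M : 'M[R]_n) :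
  (1 < n)%N -> (forall i j, 0 <= M i j) -> (forall i, \tr M <= \sum_j M i j) ->
  ~ positive_stable M.
Proof.
move=> n_gt1 M_ge0 tr_le stM.
have [t le_trt rt] := char_poly_root_ge_min_rowsum (ltnW n_gt1) M_ge0 tr_le.
by have := root_char_poly_lt_trace n_gt1 stM rt; rewrite ltNge le_trt.
Qed.

Lemma legal_params_bounds (R : realFieldType) (eps delta : R) :
  legal_params eps delta -> [/\ 0 < eps, 0 < delta, eps < 1 & eps < delta].
Proof.
move=> [delta_gt0 [eps_gt0]]; rewrite ltr_pdivlMr ?addr_gt0 // mulrDr mulr1 => lt_eps.
have : 0 < eps * delta by rewrite mulr_gt0.
by split=> //; nra.
Qed.

Definition non_in_nbhd (T : finType) (G : rel T) (i : T) : {set T} :=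
  [set j | ~~ ((j == i) || G j i)].

Lemma card_non_in_nbhd (T : finType) (G : rel T) (i : T) :
  ~~ G i i -> (#|non_in_nbhd G i| + (indeg G i).+1)%N = #|T|.
Proof.
move=> Gii; have -> : non_in_nbhd G i = ~: (i |: [set j | G j i]).
  by apply/setP => j; rewrite !inE.
by rewrite -(cardsC (i |: [set j | G j i])) cardsU1 inE (negPf Gii) addnC.
Qed.

Lemma leq_card_preimset_surj (aT rT : finType) (f : aT -> rT) (A : {set rT}) :
  (forall y, exists x, f x = y) -> (#|A| <= #|f @^-1: A|)%N.
Proof.
move=> f_surj; have [g fgK] := fin_all_exists f_surj.
rewrite -(card_imset _ (can_inj fgK)) subset_leq_card // sub_imset_pre.
by apply/subsetP => y Ay; rewrite !inE fgK.
Qed.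

Lemma sumr_delta (R : pzSemiRingType) (I : finType) (F : I -> R) (i : I) :
  \sum_j F j * (i == j)%:R = F i.
Proof.
by rewrite (bigD1 i) //= eqxx mulr1 big1 ?addr0 // => j ji; rewrite eq_sym (negPf ji) mulr0.
Qed.

Section CompositeCliqueGraph.

Variables (R : rcfType) (n m : nat) (c : 'I_n -> 'I_m) (Gh : rel 'I_m) (eps delta : R).

Lemma non_in_nbhd_composite (v : 'I_n) :
  non_in_nbhd (composite_clique_graph c Gh) v = c @^-1: non_in_nbhd Gh (c v).
Proof.
apply/setP => u; rewrite !inE /composite_clique_graph.
by case: eqVneq => [->|]; rewrite ?eqxx.
Qed.

Definition skeleton_weight (i j : 'I_m) : R :=
  if j \in non_in_nbhd Gh i then 1 + delta else 1 - eps.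

Definition component_mx : 'M[R]_(n, m) := \matrix_(u, i) (c u == i)%:R.

Definition skeleton_mx : 'M[R]_(m, n) := \matrix_(i, w) skeleton_weight i (c w).

Lemma ctln_composite_clique :
  1%:M - ctln (composite_clique_graph c Gh) eps delta = eps%:M + component_mx *m skeleton_mx.
Proof.
apply/matrixP => u w; rewrite !mxE (bigD1 (c u)) //= big1 => [|i iu]; last first.
  by rewrite !mxE eq_sym (negPf iu) mul0r.
rewrite !mxE eqxx mul1r addr0 /skeleton_weight /composite_clique_graph inE.
case: (eqVneq u w) => [->|uw] /=; first by rewrite eqxx /=; lra.
by rewrite eq_sym; case: (_ || _) => /=; lra.
Qed.

Definition reduced_mx : 'M[R]_m := skeleton_mx *m component_mx + eps%:M.

Lemma reduced_mxE i j :
  reduced_mx i j = \sum_w skeleton_weight i (c w) * (c w == j)%:R + eps * (i == j)%:R.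
Proof.
by rewrite !mxE mulr_natr; congr (_ + _); apply: eq_bigr => w _; rewrite !mxE.
Qed.

Lemma skeleton_weightE i j :
  skeleton_weight i j = (1 - eps) + (delta + eps) * (j \in non_in_nbhd Gh i)%:R.
Proof. by rewrite /skeleton_weight; case: (_ \in _); rewrite ?mulr1 ?mulr0; lra. Qed.

Lemma sum_skeleton_weight i :
  \sum_w skeleton_weight i (c w) =
    n%:R * (1 - eps) + (delta + eps) * #|c @^-1: non_in_nbhd Gh i|%:R.
Proof.
under eq_bigr do rewrite skeleton_weightE.
rewrite big_split /= sumr_const card_ord mulr_natl -mulr_sumr -sum1_card natr_sum.
rewrite [in RHS]big_mkcond; congr (_ + _ * _); apply: eq_bigr => w _.
by rewrite !inE; case: (_ || _).
Qed.

Lemma rowsum_reduced_mx i : \sum_j reduced_mx i j = \sum_w skeleton_weight i (c w) + eps.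
Proof.
under eq_bigr do rewrite reduced_mxE.
by rewrite big_split /= exchange_big /= sumr_delta; under eq_bigr do rewrite sumr_delta.
Qed.

Lemma trace_reduced_mx : \tr reduced_mx = n%:R * (1 - eps) + m%:R * eps.
Proof.
rewrite /mxtrace; under eq_bigr do rewrite reduced_mxE eqxx mulr1.
rewrite big_split /= exchange_big /= sumr_const card_ord !mulr_natl; congr (_ + _).
under eq_bigr do rewrite sumr_delta /skeleton_weight inE eqxx /=.
by rewrite sumr_const card_ord.
Qed.

Lemma reduced_mx_ge0 : 0 <= eps <= 1 -> 0 <= delta -> forall i j, 0 <= reduced_mx i j.
Proof.
move=> /andP[eps_ge0 eps_le1] delta_ge0 i j; rewrite reduced_mxE.
have weight_ge0 k l : 0 <= skeleton_weight k l by rewrite /skeleton_weight; case: ifP; lra.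
by rewrite addr_ge0 ?mulr_ge0 ?ler0n ?sumr_ge0 // => w _; rewrite mulr_ge0 ?ler0n.
Qed.

Lemma composite_clique_not_stable_motif (theta : R) :
  legal_params eps delta -> (1 < m)%N ->
  (forall i, m <= (2 * #|c @^-1: non_in_nbhd Gh i|).+1)%N ->
  ~ stable_motif (composite_clique_graph c Gh) eps delta theta.
Proof.
move=> /legal_params_bounds [eps_gt0 delta_gt0 eps_lt1 eps_lt_delta] m_gt1 m_le [_ _ stable].
have eps_01 : 0 <= eps <= 1 by rewrite (ltW eps_gt0) (ltW eps_lt1).
have stable_reduced : positive_stable reduced_mx.
  by apply: (positive_stable_mulmxC eps_gt0); rewrite -ctln_composite_clique.
have reduced_ge0 := reduced_mx_ge0 eps_01 (ltW delta_gt0).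
apply: (nonneg_mx_not_positive_stable m_gt1 reduced_ge0 _ stable_reduced).
move=> i; rewrite rowsum_reduced_mx sum_skeleton_weight trace_reduced_mx -addrA lerD2l.
set N := #|_|; have le_m : (m%:R : R) <= 2 * N%:R + 1.
  by move: (m_le i); rewrite -(ler_nat R) -addn1 natrD natrM.
have := ler_wpM2r (ltW eps_gt0) le_m.
have := ler_wpM2r (ler0n R N) (ltW eps_lt_delta).
lra.
Qed.

End CompositeCliqueGraph.

Theorem theorem14 (R : rcfType) (n m : nat) (c : 'I_n -> 'I_m) (Gh : rel 'I_m) :
  (2 <= m)%N ->
  (forall i : 'I_m, exists v : 'I_n, c v = i) ->
  simple_digraph Gh ->
  ((2 * max_indeg (composite_clique_graph c Gh) + m + 1 <= 2 * n)%N ->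
     forall eps delta theta : R, legal_params eps delta -> 0 < theta ->
       ~ stable_motif (composite_clique_graph c Gh) eps delta theta)
  /\
  ((2 * max_indeg Gh < m)%N ->
     forall eps delta theta : R, legal_params eps delta -> 0 < theta ->
       ~ stable_motif (composite_clique_graph c Gh) eps delta theta).
Proof.
move=> m_gt1 c_surj Gh_simple; split=> indeg_le eps delta theta legal _;
  apply: composite_clique_not_stable_motif legal m_gt1 _ => i.
- have [v <-] := c_surj i.
  have G_irrefl : ~~ composite_clique_graph c Gh v v by rewrite /composite_clique_graph eqxx.
  have := card_non_in_nbhd G_irrefl; rewrite non_in_nbhd_composite card_ord.
  have : (indeg (composite_clique_graph c Gh) v <= max_indeg (composite_clique_graph c Gh))%N.
    exact: leq_bigmax.
  lia.
- have : (#|non_in_nbhd Gh i| <= #|c @^-1: non_in_nbhd Gh i|)%N.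
    exact: leq_card_preimset_surj.
  have := card_non_in_nbhd (Gh_simple i); rewrite card_ord.
  have : (indeg Gh i <= max_indeg Gh)%N by exact: leq_bigmax.
  lia.
Qed.
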